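(* Let $\mathcal H=\mathbb C^4$ with orthonormal basis $|0\rangle,|1\rangle,|2\rangle,|3\rangle$, let $0<p<\tfrac12$, $|\nu^\pm\rangle=\tfrac12(\pm|0\rangle+|1\rangle\pm|2\rangle+|3\rangle)$, and $\rho_1=p|0\rangle\langle0|+(1-p)|1\rangle\langle1|$, $\rho_2=p|\nu^+\rangle\langle\nu^+|+(1-p)|\nu^-\rangle\langle\nu^-|$. Then $\rho_1$ and $\rho_2$ have the same spectrum and all Jordan angles between $\operatorname{supp}\rho_1$ and $\operatorname{supp}\rho_2$ are equal, but the set $\{\rho_1,\rho_2\}$ is not essentially pure.
   Context: $\operatorname{supp}\rho$ is the orthogonal complement of the kernel of $\rho$; Jordan angles are the principal (canonical) angles between two subspaces. A set $\mathcal M$ of density operators on $\mathcal H$ is essentially pure if there exist finite-dimensional Hilbert spaces $\mathcal H_C,\mathcal H_A,\mathcal H_B$ with $\mathcal H\otimes\mathcal H_C\cong\mathcal H_A\otimes\mathcal H_B$, density operators $\sigma_B$ on $\mathcal H_B$, $\omega_C$ on $\mathcal H_C$ and a unitary $U$ (from $\mathcal H_A\otimes\mathcal H_B$ to $\mathcal H\otimes\mathcal H_C$) such that $\{\rho\otimes\omega_C\mid\rho\in\mathcal M\}\subseteq\{U(|\phi\rangle\langle\phi|\otimes\sigma_B)U^\dagger\mid|\phi\rangle\in\mathcal H_A,\ \|\phi\|=1\}$. *)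

From HB Require Import structures.
From mathcomp Require Import all_boot all_order all_algebra.
From mathcomp Require Import mxtens complex reals.
Set Implicit Arguments. Unset Strict Implicit. Unset Printing Implicit Defensive.
Import Order.TTheory GRing.Theory Num.Theory.
Local Open Scope ring_scope.
Local Open Scope sesquilinear_scope.

Section QuantumDefs.
Variable C : numClosedFieldType.

Definition adj {m n} (A : 'M[C]_(m, n)) : 'M[C]_(n, m) := A ^t*.

Definition hermitian {n} (A : 'M[C]_n) : Prop := adj A = A.

Definition psd {n} (A : 'M[C]_n) : Prop :=
  hermitian A /\ forall v : 'cV[C]_n, 0 <= (adj v *m A *m v) 0 0.

Definition density {n} (A : 'M[C]_n) : Prop := psd A /\ \tr A = 1.

Definition unit_vector {n} (v : 'cV[C]_n) : Prop := adj v *m v = 1%:M.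

Definition ketbra {n} (v : 'cV[C]_n) : 'M[C]_n := v *m adj v.

(* a unitary map C^n -> C^m  (forces m = n) *)
Definition unitary_map {m n} (U : 'M[C]_(m, n)) : Prop :=
  U *m adj U = 1%:M /\ adj U *m U = 1%:M.

Definition supp {n} (rho : 'M[C]_n) : 'cV[C]_n -> Prop :=
  fun v => forall w : 'cV[C]_n, rho *m w = 0 -> adj w *m v = 0.

Definition onb_of {n k} (Q : 'M[C]_(n, k)) (S : 'cV[C]_n -> Prop) : Prop :=
  adj Q *m Q = 1%:M /\ forall v, S v <-> exists x : 'cV[C]_k, v = Q *m x.

(* Jordan (principal) angles between two k-dimensional subspaces S, T:
   if QS, QT are orthonormal bases, the cosines of the Jordan angles are the
   singular values of G := QS^* QT, i.e. their squares are the eigenvalues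
   (with multiplicity) of G G^*.  "All Jordan angles are equal" means all these
   eigenvalues coincide, i.e. the characteristic polynomial of G G^* is
   (X - c)^k.  (Angles lie in [0, pi/2], where cos^2 is injective.) *)
Definition all_jordan_angles_equal {n} (S T : 'cV[C]_n -> Prop) : Prop :=
  exists k (QS QT : 'M[C]_(n, k)),
    onb_of QS S /\ onb_of QT T /\
    exists c : C, char_poly ((adj QS *m QT) *m adj (adj QS *m QT))
                  = ('X - c%:P) ^+ k.

(* Essential purity of a set M of density operators on C^n:
   H = C^n, H_C = C^dC, H_A = C^dA, H_B = C^dB with H (x) H_C ~ H_A (x) H_B,
   density operators sigma_B, omega_C and a unitary U : H_A (x) H_B -> H (x) H_C
   with  rho (x) omega_C = U (|phi><phi| (x) sigma_B) U^*  for every rho in M,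
   for some unit vector phi in H_A (depending on rho). *)
Definition essentially_pure {n} (M : 'M[C]_n -> Prop) : Prop :=
  exists (dC dA dB : nat) (sigmaB : 'M[C]_dB) (omegaC : 'M[C]_dC)
         (U : 'M[C]_(n * dC, dA * dB)),
    (n * dC = dA * dB)%N /\ density sigmaB /\ density omegaC /\ unitary_map U /\
    forall rho, M rho ->
      exists phi : 'cV[C]_dA, unit_vector phi /\
        rho *t omegaC = U *m (ketbra phi *t sigmaB) *m adj U.

End QuantumDefs.

Section Example.
Variable R : realType.
Local Notation C := R[i].
Local Open Scope complex_scope.

Definition ket (j : 'I_4) : 'cV[C]_4 := delta_mx j 0.

Definition nu_plus : 'cV[C]_4 :=
  (1 / 2) *: (ket 0 + ket 1 + ket 2 + ket 3).
Definition nu_minus : 'cV[C]_4 :=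
  (1 / 2) *: (- ket 0 + ket 1 - ket 2 + ket 3).

Definition rho1 (p : R) : 'M[C]_4 :=
  p%:C *: ketbra (ket 0) + (1 - p)%:C *: ketbra (ket 1).
Definition rho2 (p : R) : 'M[C]_4 :=
  p%:C *: ketbra nu_plus + (1 - p)%:C *: ketbra nu_minus.

End Example.

From Pilot Require Import Defs.
From HB Require Import structures.
From mathcomp Require Import all_boot all_order all_algebra.
From mathcomp Require Import mxtens complex reals.
From mathcomp Require Import ring lra.
Import Order.TTheory GRing.Theory Num.Theory.
Local Open Scope ring_scope.

(* Both states are compressions Q D Q^* of the same weight matrix
   D = diag(p, 1 - p) to orthonormal frames Q: the frame (|0>, |1>) for rho1 and
   (nu+, nu-) for rho2.  The second frame is the image of the first under a real
   Hadamard-type unitary, so the spectra agree; the overlap G = Q1^* Q2 is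
   1/sqrt 2 times a rotation, so G G^* = 1/2 and every Jordan angle is pi/4.
   If the pair were essentially pure, rho (x) omega_C = U (|phi><phi| (x) sigma_B) U^*
   would give (r1 r2 r1) (x) omega_C^3 = s (r1^3 (x) omega_C^3), since
   |a><a| |b><b| |a><a| is a multiple of |a><a|; as omega_C^3 <> 0 this forces
   r1 r2 r1 = s r1^3.  Compressing to supp rho1 and cancelling D, the compression
   G D G^* of rho2 would be a multiple of the diagonal D, yet its off-diagonal
   entry is (p - (1 - p)) / 4 <> 0 because p <> 1/2. *)

Set Implicit Arguments.
Unset Strict Implicit.
Unset Printing Implicit Defensive.

Lemma char_poly_conj (R : comUnitRingType) n (A V W : 'M[R]_n) :
  W *m V = 1%:M -> char_poly (V *m A *m W) = char_poly A.
Proof.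
move=> WV; have VW := mulmx1C WV.
pose f := map_mx (@polyC R).
have fVXW : f n n V *m 'X%:M *m f n n W = 'X%:M.
  by rewrite mul_mx_scalar -scalemxAl -map_mxM VW map_mx1 scalemx1.
have cpVAW : char_poly_mx (V *m A *m W) = f n n V *m char_poly_mx A *m f n n W.
  by rewrite /char_poly_mx mulmxBr mulmxBl fVXW !map_mxM.
rewrite /char_poly cpVAW !det_mulmx mulrC mulrA -det_mulmx -map_mxM WV map_mx1 det1.
by rewrite mul1r.
Qed.

Lemma char_poly_scalar (R : comNzRingType) n (c : R) :
  char_poly (c%:M : 'M[R]_n) = ('X - c%:P) ^+ n.
Proof.
rewrite char_poly_trig ?scalar_mx_is_trig //.
under eq_bigr do rewrite mxE eqxx mulr1n.
by rewrite prodr_const card_ord.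
Qed.

Lemma tensmxZl (R : pzRingType) m n p q (s : R) (A : 'M[R]_(m, n)) (B : 'M[R]_(p, q)) :
  (s *: A) *t B = s *: (A *t B).
Proof. by apply/matrixP => i j; rewrite !mxE mulrA. Qed.

Lemma tensmx_scale_cancel (R : idomainType) m n p q (A B : 'M[R]_(m, n))
    (W : 'M[R]_(p, q)) (s : R) :
  W != 0 -> A *t W = s *: (B *t W) -> A = s *: B.
Proof.
rewrite matrix_eq0 => /forallPn[a /forallPn[b /negPf Wab]] AWsBW.
apply/matrixP => i j; apply/(mulIf (negbT Wab)).
have := congr1 (fun M : 'M_(m * p, n * q) =>
  M (mxtens_index (i, a)) (mxtens_index (j, b))) AWsBW.
by rewrite /= [in RHS]mxE !tensmxE mxE mulrA.
Qed.

Lemma scalar_block_mxM (R : pzRingType) k (a b c d a' b' c' d' : R) :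
  block_mx a%:M b%:M c%:M d%:M *m block_mx a'%:M b'%:M c'%:M d'%:M
  = block_mx (a * a' + b * c')%:M (a * b' + b * d')%:M
             (c * a' + d * c')%:M (c * b' + d * d')%:M :> 'M[R]_(k + k).
Proof. by rewrite mulmx_block -!scalar_mxM -!raddfD. Qed.

Section Adjoint.
Variable C : numClosedFieldType.

Lemma adjE m n (A : 'M[C]_(m, n)) i j : adj A i j = (A j i)^*.
Proof. by rewrite !mxE. Qed.

Lemma adjK m n (A : 'M[C]_(m, n)) : adj (adj A) = A.
Proof. exact: trmxCK. Qed.

Lemma adjM m n k (A : 'M[C]_(m, n)) (B : 'M[C]_(n, k)) :
  adj (A *m B) = adj B *m adj A.
Proof. by rewrite /adj trmx_mul map_mxM. Qed.

Lemma adj_row_mx m n1 n2 (A : 'M[C]_(m, n1)) (B : 'M[C]_(m, n2)) :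
  adj (row_mx A B) = col_mx (adj A) (adj B).
Proof. by rewrite /adj tr_row_mx map_col_mx. Qed.

Lemma adj_delta_mx m n (i : 'I_m) (j : 'I_n) : adj (delta_mx i j : 'M[C]__) = delta_mx j i.
Proof. by apply/matrixP => a b; rewrite !mxE conjC_nat andbC. Qed.

Lemma adj_delta_mul n (i : 'I_n) (v : 'cV[C]_n) : adj (delta_mx i 0) *m v = (v i 0)%:M.
Proof. by rewrite adj_delta_mx -rowE [row i v]mx11_scalar mxE. Qed.

Lemma adj_scalar_block k (a b c d : C) :
  adj (block_mx a%:M b%:M c%:M d%:M : 'M_(k + k))
  = block_mx (a^*)%:M (c^*)%:M (b^*)%:M (d^*)%:M.
Proof. by rewrite /adj tr_block_mx map_block_mx !tr_scalar_mx !map_scalar_mx. Qed.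

Lemma conjC_half : (1 / 2 : C)^* = 1 / 2.
Proof. by rewrite fmorph_div rmorph1 rmorph_nat. Qed.

Lemma mulmx_adj_eq0 m n (A : 'M[C]_(m, n)) : A *m adj A = 0 -> A = 0.
Proof.
move=> AA0; apply/matrixP => i j; rewrite mxE.
have := congr1 (fun M : 'M[C]_m => M i i) AA0; rewrite !mxE.
under eq_bigr do rewrite adjE.
move/eqP; rewrite psumr_eq0 => [/allP/(_ j)|]; last by move=> *; exact: mul_conjC_ge0.
by rewrite mem_index_enum mul_conjC_eq0 => /(_ isT) /eqP.
Qed.

Lemma adj_mulmx_eq0 m n (A : 'M[C]_(m, n)) : adj A *m A = 0 -> A = 0.
Proof.
move=> AA0; have := @mulmx_adj_eq0 _ _ (adj A); rewrite adjK => /(_ AA0) A'0.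
by rewrite -[A]adjK A'0 /adj trmx0 map_mx0.
Qed.

(* Unqualified, [hermitian] would be the notation from sesquilinear.v. *)
Lemma hermitian_cube_neq0 n (A : 'M[C]_n) :
  Defs.hermitian A -> A != 0 -> A *m A *m A != 0.
Proof.
rewrite /Defs.hermitian => hA; apply: contra_neq => A3.
have A2 : A *m A = 0.
  by apply: mulmx_adj_eq0; rewrite adjM hA mulmxA A3 mul0mx.
by apply: mulmx_adj_eq0; rewrite hA.
Qed.

End Adjoint.

Section Compression.
Variable C : numClosedFieldType.

Lemma ketbra_pair n (a b : C) (u v : 'cV[C]_n) :
  a *: ketbra u + b *: ketbra v
  = row_mx u v *m block_mx a%:M 0 0 b%:M *m adj (row_mx u v).
Proof.
rewrite adj_row_mx mul_row_block !mulmx0 addr0 add0r mul_row_col.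
by rewrite !mul_mx_scalar -!scalemxAl.
Qed.

Lemma supp_compression n k (Q : 'M[C]_(n, k)) (D : 'M[C]_k) :
  adj Q *m Q = 1%:M -> D \in unitmx -> onb_of Q (supp (Q *m D *m adj Q)).
Proof.
move=> QQ1 Dunit; split=> // v.
have kerE w : Q *m D *m adj Q *m w = 0 -> adj Q *m w = 0.
  move=> /(congr1 (mulmx (invmx D *m adj Q))).
  by rewrite mulmx0 !mulmxA -(mulmxA (invmx D)) QQ1 mulmx1 mulVmx // mul1mx.
split=> [suppv | [x ->] w /kerE Qw]; last first.
  by rewrite mulmxA -[Q]adjK -adjM Qw /adj trmx0 map_mx0 mul0mx.
exists (adj Q *m v).
set w := v - Q *m (adj Q *m v).
have Qw : adj Q *m w = 0 by rewrite /w mulmxBr (mulmxA (adj Q) Q) QQ1 mul1mx subrr.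
have wQ : adj w *m Q = 0 by rewrite -[Q]adjK -adjM Qw /adj trmx0 map_mx0.
have wv : adj w *m v = 0 by apply: suppv; rewrite -!mulmxA Qw !mulmx0.
suff /adj_mulmx_eq0/eqP : adj w *m w = 0 by rewrite subr_eq0 => /eqP.
by rewrite {2}/w mulmxBr wv (mulmxA (adj w) Q) wQ mul0mx subrr.
Qed.

Lemma compression_sandwich n k (Q : 'M[C]_(n, k)) (D : 'M[C]_k) (X : 'M[C]_n) s :
  adj Q *m Q = 1%:M -> D \in unitmx ->
  let r := Q *m D *m adj Q in
  r *m X *m r = s *: (r *m r *m r) -> adj Q *m X *m Q = s *: D.
Proof.
move=> QQ1 Dunit r.
have compress Y : adj Q *m (r *m Y *m r) *m Q = D *m (adj Q *m Y *m Q) *m D.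
  by rewrite /r !mulmxA QQ1 mul1mx -!mulmxA QQ1 mulmx1.
have QrQ : adj Q *m r *m Q = D.
  by rewrite /r !mulmxA QQ1 mul1mx -mulmxA QQ1 mulmx1.
move=> /(congr1 (fun Y => invmx D *m (adj Q *m Y *m Q) *m invmx D)).
rewrite -scalemxAr -scalemxAl -scalemxAr -scalemxAl !compress QrQ.
by rewrite !mulmxA mulVmx // !mul1mx !mulmxK.
Qed.

End Compression.

Section EssentialPurity.
Variable C : numClosedFieldType.

Lemma ketbra_sandwich n (u v : 'cV[C]_n) :
  ketbra u *m ketbra v *m ketbra u
  = ((adj u *m v) 0 0 * (adj v *m u) 0 0) *: ketbra u.
Proof.
rewrite /ketbra.
have -> : u *m adj u *m (v *m adj v) *m (u *m adj u)
          = u *m (adj u *m v) *m (adj v *m u) *m adj u by rewrite !mulmxA.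
rewrite [adj u *m v]mx11_scalar [adj v *m u]mx11_scalar !mul_mx_scalar.
by rewrite -!scalemxAl scalerA !mxE !mulr1n mulrC.
Qed.

Lemma ketbra_unit_cube n (u : 'cV[C]_n) :
  unit_vector u -> ketbra u *m ketbra u *m ketbra u = ketbra u.
Proof. by move=> uu1; rewrite ketbra_sandwich uu1 mxE mulr1n mul1r scale1r. Qed.

Lemma unitary_conjM m n (U : 'M[C]_(m, n)) (A B : 'M[C]_n) :
  adj U *m U = 1%:M -> U *m A *m adj U *m (U *m B *m adj U) = U *m (A *m B) *m adj U.
Proof. by move=> UU1; rewrite !mulmxA -(mulmxA _ (adj U)) UU1 mulmx1. Qed.

Lemma essentially_pure_sandwich n (M : 'M[C]_n -> Prop) (r1 r2 : 'M[C]_n) :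
  essentially_pure M -> M r1 -> M r2 ->
  exists s, r1 *m r2 *m r1 = s *: (r1 *m r1 *m r1).
Proof.
move=> [dC [dA [dB [sigma [omega [U [_ [_ [[[herm_omega _] tr_omega] [[_ UU1] pureM]]]]]]]]]].
move=> Mr1 Mr2.
have [phi1 [unit_phi1 r1E]] := pureM r1 Mr1.
have [phi2 [_ r2E]] := pureM r2 Mr2.
have omega_neq0 : omega != 0.
  by apply: contra_eq_neq tr_omega => ->; rewrite mxtrace0 eq_sym oner_neq0.
exists ((adj phi1 *m phi2) 0 0 * (adj phi2 *m phi1) 0 0).
apply: (tensmx_scale_cancel (hermitian_cube_neq0 herm_omega omega_neq0)).
rewrite -!tensmx_mul r1E r2E !unitary_conjM // !tensmx_mul ketbra_sandwich.
rewrite ketbra_unit_cube // tensmxZl.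
by rewrite -scalemxAr -scalemxAl.
Qed.

End EssentialPurity.

Section Example.
Variable R : realType.
Local Notation C := R[i].
Local Open Scope complex_scope.
Variable p : R.

Definition ket01 : 'M[C]_(4, 1 + 1) := row_mx (ket R 0) (ket R 1).

Definition nu_frame : 'M[C]_(4, 1 + 1) := row_mx (nu_plus R) (nu_minus R).

Definition weights : 'M[C]_(1 + 1) := block_mx (p%:C)%:M 0 0 ((1 - p)%:C)%:M.

Definition overlap : 'M[C]_(1 + 1) := adj ket01 *m nu_frame.

(* Its columns are nu+, nu-, (1, 1, -1, -1) / 2 and (-1, 1, 1, -1) / 2. *)
Definition hadamard4 : 'M[C]_4 :=
  \matrix_(i, j) ((-1) ^+ (odd j && ~~ odd i) * (-1) ^+ (odd j./2 && odd i./2) / 2).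

Lemma rho1E : rho1 p = ket01 *m weights *m adj ket01.
Proof. exact: ketbra_pair. Qed.

Lemma hadamard4_unitary : adj hadamard4 *m hadamard4 = 1%:M.
Proof.
apply/matrixP => i j; rewrite !mxE !big_ord_recl big_ord0 !mxE.
case: i => [[|[|[|[|i]]]] Hi] //; case: j => [[|[|[|[|j]]]] Hj] //=.
all: by rewrite !(rmorphM, rmorphXn, fmorph_div, conjCN1, conjC_nat); field.
Qed.

Lemma hadamard4_ket01 : hadamard4 *m ket01 = nu_frame.
Proof.
rewrite mul_mx_row -!colE; congr row_mx; apply/matrixP => i j;
  rewrite !ord1 !mxE; case: i => [[|[|[|[|i]]]] Hi] //=.
all: by field.
Qed.

Lemma rho2E : rho2 p = nu_frame *m weights *m adj nu_frame.
Proof. exact: ketbra_pair. Qed.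

Lemma rho2_conj : rho2 p = hadamard4 *m rho1 p *m adj hadamard4.
Proof. by rewrite rho2E rho1E -hadamard4_ket01 adjM !mulmxA. Qed.

Lemma ket01_isometry : adj ket01 *m ket01 = 1%:M.
Proof.
rewrite adj_row_mx mul_col_row !adj_delta_mul scalar_mx_block !mxE /=.
by rewrite mulr1n mulr0n raddf0.
Qed.

Lemma nu_frame_isometry : adj nu_frame *m nu_frame = 1%:M.
Proof.
rewrite -hadamard4_ket01 adjM !mulmxA -(mulmxA _ _ hadamard4).
by rewrite hadamard4_unitary mulmx1 ket01_isometry.
Qed.

Lemma overlapE : overlap
  = block_mx (1 / 2 : C)%:M (- (1 / 2))%:M (1 / 2 : C)%:M (1 / 2 : C)%:M.
Proof.
rewrite /overlap adj_row_mx mul_col_row !adj_delta_mul.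
by congr block_mx; congr scalar_mx; rewrite !mxE /=; field.
Qed.

Lemma overlap_mul_adj : overlap *m adj overlap = (1 / 2 : C)%:M.
Proof.
rewrite overlapE adj_scalar_block scalar_block_mxM scalar_mx_block.
congr block_mx; apply/matrixP => i j; rewrite !ord1 !mxE /=.
all: by rewrite ?rmorphN conjC_half; field.
Qed.

Hypotheses (p_gt0 : 0 < p) (p_lt_half : p < 1 / 2).

Lemma weights_unit : weights \in unitmx.
Proof.
have pos_neq0 (x : R) : 0 < x -> x%:C != 0 by move=> x_gt0; rewrite lt0r_neq0 // ltcR.
rewrite unitmxE det_ublock !det_scalar1 unitfE mulf_neq0 ?pos_neq0 //.
by move: p_lt_half; lra.
Qed.

Lemma compress_rho2_neq_scaled_weights s :
  adj ket01 *m rho2 p *m ket01 != s *: weights.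
Proof.
have -> : adj ket01 *m rho2 p *m ket01 = overlap *m weights *m adj overlap.
  by rewrite rho2E /overlap adjM adjK !mulmxA.
have weightsE : weights
    = block_mx (p%:C)%:M (0 : C)%:M (0 : C)%:M ((1 - p)%:C)%:M.
  by rewrite raddf0.
rewrite overlapE weightsE adj_scalar_block !scalar_block_mxM scale_block_mx.
apply/negP => /eqP /eq_block_mx [_ + _ _] => /(congr1 (fun M : 'M_1 => M 0 0)).
rewrite !mxE /= conjC_half mul0rn mulr1n !mulr0 => E.
have : (p%:C - (1 - p)%:C) / 4 = 0 by rewrite -E; field.
move/eqP; rewrite mulf_eq0 invr_eq0 pnatr_eq0 orbF subr_eq0 => /eqP /complexI.
by move: p_lt_half; lra.
Qed.

Lemma rho1_rho2_char_poly : char_poly (rho1 p) = char_poly (rho2 p).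
Proof. by rewrite rho2_conj char_poly_conj // hadamard4_unitary. Qed.

Lemma supp_rho1 : onb_of ket01 (supp (rho1 p)).
Proof. by rewrite rho1E; exact: supp_compression ket01_isometry weights_unit. Qed.

Lemma supp_rho2 : onb_of nu_frame (supp (rho2 p)).
Proof. by rewrite rho2E; exact: supp_compression nu_frame_isometry weights_unit. Qed.

Lemma rho1_rho2_jordan_angles_equal :
  all_jordan_angles_equal (supp (rho1 p)) (supp (rho2 p)).
Proof.
exists (1 + 1)%N, ket01, nu_frame.
split; first exact: supp_rho1.
split; first exact: supp_rho2.
by exists (1 / 2); rewrite -/overlap overlap_mul_adj char_poly_scalar.
Qed.

Lemma rho1_rho2_not_essentially_pure :
  ~ essentially_pure (fun rho => rho = rho1 p \/ rho = rho2 p).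
Proof.
move=> pure; have [s] := essentially_pure_sandwich pure (or_introl erefl) (or_intror erefl).
rewrite rho1E => /(compression_sandwich ket01_isometry weights_unit).
exact/eqP/compress_rho2_neq_scaled_weights.
Qed.

End Example.

Unset Implicit Arguments.

Theorem mainTheorem9 (R : realType) (p : R) (hp0 : 0 < p) (hp1 : p < 1 / 2) :
  char_poly (rho1 p) = char_poly (rho2 p) /\
  all_jordan_angles_equal (supp (rho1 p)) (supp (rho2 p)) /\
  ~ essentially_pure (fun rho => rho = rho1 p \/ rho = rho2 p).
Proof.
split; first exact: rho1_rho2_char_poly.
split; first exact: rho1_rho2_jordan_angles_equal.
exact: rho1_rho2_not_essentially_pure.
Qed.
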